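(* Let $i\ge 3$ and $k\ge 3$ be integers, let $p$ be a nonnegative integer, and put $r=\lfloor (F_i-1)/F_k\rfloor$. If $r\ge p$, then $$n_p(F_i,F_{i+2},F_{i+k})=\tfrac12\bigl((F_i+2pF_k-1)F_{i+2}-F_i+1\bigr)-\tfrac12\bigl(2rF_i-(r+p+1)(r-p)F_k\bigr)F_{k-2}.$$
   Context: Fibonacci numbers: $F_0=0$, $F_1=1$, $F_n=F_{n-1}+F_{n-2}$. For positive integers $a_1,\dots,a_l$ with $\gcd(a_1,\dots,a_l)=1$ and an integer $n$, let $d(n;a_1,\dots,a_l)$ be the number of tuples $(x_1,\dots,x_l)$ of nonnegative integers with $a_1x_1+\dots+a_lx_l=n$. For a nonnegative integer $p$, the $p$-Sylvester number $n_p(a_1,\dots,a_l)$ is the number of nonnegative integers $n$ with $d(n;a_1,\dots,a_l)\le p$. *)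

From mathcomp Require Import all_boot all_order all_algebra.
Set Implicit Arguments. Unset Strict Implicit. Unset Printing Implicit Defensive.

Fixpoint fib (n : nat) : nat :=
  match n with
  | 0 => 0
  | 1 => 1
  | (m.+1 as k).+1 => fib k + fib m
  end.

(* d(n; a_1,...,a_l): number of tuples (x_1,...,x_l) of nonnegative integers
   with a_1 x_1 + ... + a_l x_l = n.  For positive a_i every solution has
   x_i <= n, so we count tuples in {0..n}^l. *)
Definition num_reps (a : seq nat) (n : nat) : nat :=
  #|[set x : {ffun 'I_(size a) -> 'I_n.+1} |
      \sum_(j < size a) nth 0 a j * x j == n]|.

Definition count_le (a : seq nat) (p N : nat) : nat :=
  #|[set n : 'I_N | num_reps a n <= p]|.

(* m is the p-Sylvester number n_p(a): the set {n >= 0 | d(n;a) <= p} is finite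
   and has exactly m elements. *)
Definition is_sylvester_p (a : seq nat) (p m : nat) : Prop :=
  exists N : nat, (forall n, N <= n -> p < num_reps a n) /\ count_le a p N = m.

From mathcomp Require Import all_boot all_order all_algebra.
From mathcomp Require Import zify lra.
Set Implicit Arguments. Unset Strict Implicit. Unset Printing Implicit Defensive.

(* Put a = F_i, b = F_(i+2), c = F_(i+k), f = F_k and g = F_(k-2), so that
   c + g a = f b.  If n = b t (mod a) with t < a, then in a representation
   a x + b y + c z = n we have b (y + f z) = n + a g z - a x, so y + f z = t (mod a), and for
   n < b t + a b only the levels y + f z = t and y + f z = t + a occur; on level s the
   admissible z are those with f z <= s and b s <= n + a g z.  Hence d(n) grows along the
   residue class of b t, and the numbers of that class with d(n) <= p are exactly those
   below an explicit threshold, of which there are threshold / a.  Summing over t, the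
   floor sums sum_t (b t / a) = (a - 1)(b - 1) / 2 and sum_t (t / f) give the formula. *)

Lemma fib_leqS n : fib n <= fib n.+1.
Proof. by case: n => [|n] //=; apply: leq_addr. Qed.

Lemma fib_gt0 n : 0 < n -> 0 < fib n.
Proof.
case: n => // n _; elim: n => // n IH.
exact: leq_trans IH (leq_addr _ _).
Qed.

Lemma fibD2 i k : fib (i + k.+2) + fib k * fib i = fib k.+2 * fib i.+2.
Proof.
suff [] : fib (i + k.+2) + fib k * fib i = fib k.+2 * fib i.+2 /\
          fib (i + k.+3) + fib k.+1 * fib i = fib k.+3 * fib i.+2 by [].
elim: k => [|k [IHk IHkS]]; first by rewrite !addnS addn0 /=; lia.
split=> //; rewrite !addnS in IHk IHkS *.
have -> : fib (i + k).+4 = fib (i + k).+3 + fib (i + k).+2 by [].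
have -> : fib k.+2 = fib k.+1 + fib k by [].
have -> : fib k.+4 = fib k.+3 + fib k.+2 by [].
lia.
Qed.

Lemma coprime_fibS n : coprime (fib n) (fib n.+1).
Proof.
elim: n => [|n IH]; first by rewrite /coprime gcd0n.
by rewrite /coprime /= gcdnDl gcdnC.
Qed.

Lemma modnDMl x a y : x + a * y = x %[mod a].
Proof. by rewrite addnC mulnC modnMDl. Qed.

Lemma coprime_inv_mod a b : 0 < a -> coprime a b -> exists b', b' * b = 1 %[mod a].
Proof.
move=> a_gt0 /eqP cop; have [x _] := Bezoutl b a_gt0; rewrite cop => /dvdnP[m hm].
exists ((a - 1) * x); rewrite -(modnDr _ a).
have -> : (a - 1) * x * b + a = 1 + (a - 1) * (1 + x * b) by rewrite mulnDr muln1; lia.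
by rewrite hm mulnA addnC modnMDl.
Qed.

Lemma eqn_modMl_inv a b b' x y : b' * b = 1 %[mod a] ->
  b * x = b * y %[mod a] -> x = y %[mod a].
Proof.
move=> inv_b hxy.
have cancel u : u = b' * (b * u) %[mod a] by rewrite mulnA -modnMml inv_b modnMml mul1n.
by rewrite (cancel x) (cancel y) -modnMmr hxy modnMmr.
Qed.

Lemma sum_affine_eq a s n : 0 < a ->
  \sum_(x < n.+1) (a * x + s == n : nat) = (s <= n) && (a %| n - s).
Proof.
move=> a_gt0.
have [/andP[sn /dvdnP[m hm]]|H] := boolP ((s <= n) && (a %| n - s)).
  have mlt : m < n.+1.
    have : m * a <= n by rewrite -hm leq_subr.
    nia.
  rewrite (bigD1 (Ordinal mlt)) //= mulnC -hm subnK // eqxx big1 // => x /negbTE hx.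
  apply/eqP; rewrite eqb0; apply/negP => /eqP e; move/negP: hx; apply.
  by apply/eqP/val_inj/eqP => /=; rewrite -(eqn_pmul2l a_gt0); apply/eqP; lia.
rewrite big1 // => x _; apply/eqP; rewrite eqb0; apply/negP => /eqP e.
by move/negP: H; apply; apply/andP; split; [lia | apply/dvdnP; exists x; lia].
Qed.

Lemma sum_addn_eq N w T (C : bool) : (w <= T -> C -> T - w < N) ->
  \sum_(y < N) ((y + w == T) && C : nat) = (w <= T) && C.
Proof.
move=> hN; have [/andP[wT hC]|H] := boolP ((w <= T) && C).
  rewrite (bigD1 (Ordinal (hN wT hC))) //= subnK // eqxx hC big1 // => y /negbTE hy.
  apply/eqP; rewrite eqb0; apply/negP => /andP[/eqP e _].
  by move/negP: hy; apply; apply/eqP/val_inj => /=; lia.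
rewrite big1 // => y _; apply/eqP; rewrite eqb0; apply/negP => /andP[/eqP e hC].
by move/negP: H; apply; rewrite hC andbT; lia.
Qed.

Definition ffun_of_triple n (t : 'I_n.+1 * 'I_n.+1 * 'I_n.+1) : {ffun 'I_3 -> 'I_n.+1} :=
  [ffun j : 'I_3 => match val j with 0 => t.1.1 | 1 => t.1.2 | _ => t.2 end].

Lemma ffun_of_triple_inj n : injective (@ffun_of_triple n).
Proof.
move=> [[x1 y1] z1] [[x2 y2] z2] e.
have at_j j := congr1 (fun f : {ffun 'I_3 -> 'I_n.+1} => f j) e.
have := at_j ord0; have := at_j (@Ordinal 3 1 isT); have := at_j (@Ordinal 3 2 isT).
by rewrite !ffunE /= => -> -> ->.
Qed.

Definition solvable_in_x a b c n y z : bool :=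
  (b * y + c * z <= n) && (a %| n - (b * y + c * z)).

Lemma num_reps3E a b c n : 0 < a ->
  num_reps [:: a; b; c] n = \sum_(y < n.+1) \sum_(z < n.+1) solvable_in_x a b c n y z.
Proof.
move=> a_gt0; rewrite /num_reps.
have -> : [set x : {ffun 'I_(size [:: a; b; c]) -> 'I_n.+1} |
            \sum_(j < size [:: a; b; c]) nth 0 [:: a; b; c] j * x j == n] =
          @ffun_of_triple n @: [set t : 'I_n.+1 * 'I_n.+1 * 'I_n.+1 |
                                  a * t.1.1 + b * t.1.2 + c * t.2 == n].
  apply/setP => x; rewrite inE !big_ord_recl big_ord0 addn0 addnA /=.
  apply/idP/imsetP => [hx|[t]]; last by rewrite inE => ht ->; rewrite !ffunE.
  exists (x ord0, x (lift ord0 ord0), x (lift ord0 (lift ord0 ord0))); first by rewrite inE.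
  by apply/ffunP => -[[|[|[|j]]] hj]; rewrite ffunE //=; congr (x _); apply: val_inj.
rewrite card_imset; last exact: ffun_of_triple_inj.
rewrite -sum1_card big_mkcond /=.
under eq_bigr do rewrite inE.
rewrite -(pair_bigA _ (fun (xy : 'I_n.+1 * 'I_n.+1) (z : 'I_n.+1) =>
   if a * xy.1 + b * xy.2 + c * z == n then 1 else 0)) /=.
rewrite -(pair_bigA _ (fun x y : 'I_n.+1 =>
   \sum_(z < n.+1) if a * x + b * y + c * z == n then 1 else 0)) /=.
rewrite exchange_big; apply: eq_bigr => y _.
rewrite exchange_big; apply: eq_bigr => z _.
rewrite /solvable_in_x -(sum_affine_eq _ _ a_gt0); apply: eq_bigr => x _.
by rewrite -addnA; case: eqP.
Qed.

Lemma sum_widen_leq N M (F G : nat -> nat) : N <= M ->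
  (forall i, i < N -> F i <= G i) -> \sum_(i < N) F i <= \sum_(i < M) G i.
Proof.
move=> NM FG; rewrite (big_ord_widen _ _ NM) big_mkcond /=.
by apply: leq_sum => i _; case: ifP => // /FG.
Qed.

Lemma num_reps3_leq_addMn a b c n m : 0 < a ->
  num_reps [:: a; b; c] n <= num_reps [:: a; b; c] (n + a * m).
Proof.
move=> a_gt0; rewrite !num_reps3E //.
apply: (sum_widen_leq (F := fun y => \sum_(z < n.+1) solvable_in_x a b c n y z)
                      (G := fun y => \sum_(z < (n + a * m).+1)
                                        solvable_in_x a b c (n + a * m) y z)).
  by rewrite ltnS leq_addr.
move=> y _; apply: (sum_widen_leq (F := solvable_in_x a b c n y)
                                (G := solvable_in_x a b c (n + a * m) y)).
  by rewrite ltnS leq_addr.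
move=> z _; rewrite /solvable_in_x; have [/andP[le_n dvd_n]|] //= := boolP (_ && _).
have -> : b * y + c * z <= n + a * m by lia.
have -> : n + a * m - (b * y + c * z) = n - (b * y + c * z) + a * m by lia.
by rewrite dvdn_add // dvdn_mulr.
Qed.

Lemma sum_in_range N lo hi :
  \sum_(z < N) (lo <= z <= hi : nat) = minn N hi.+1 - lo.
Proof.
elim: N => [|N IH]; first by rewrite big_ord0; lia.
by rewrite big_ord_recr /= IH; case: (boolP (lo <= N <= hi)) => /=; lia.
Qed.

Lemma sum_leq_range N (h : nat -> nat) lo hi :
  (forall z, z < N -> h z <= (lo <= z <= hi)) -> \sum_(z < N) h z <= hi.+1 - lo.
Proof.
move=> H; apply: (@leq_trans (\sum_(z < N) (lo <= z <= hi : nat))).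
  by apply: leq_sum => z _; apply: H.
by rewrite sum_in_range; lia.
Qed.

Lemma sum_geq_range N (h : nat -> nat) lo hi : hi < N ->
  (forall z, lo <= z <= hi -> 0 < h z) -> hi.+1 - lo <= \sum_(z < N) h z.
Proof.
move=> hN H; apply: (@leq_trans (\sum_(z < N) (lo <= z <= hi : nat))).
  by rewrite sum_in_range; lia.
by apply: leq_sum => z _; case: (boolP (lo <= z <= hi)) => // /H.
Qed.

Lemma count_mod_window a e M : 0 < a -> e < a ->
  \sum_(M <= n < M + a) (n %% a == e : nat) = 1.
Proof.
move=> a_gt0 ea; elim: M => [|M IH].
  rewrite add0n big_mkord -[1]/((0 <= e) && true : nat).
  rewrite -(@sum_addn_eq a 0 e true) => [|_ _]; last by rewrite subn0.
  by apply: eq_bigr => i _; rewrite addn0 andbT modn_small.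
rewrite big_ltn in IH; last by lia.
by rewrite addSn big_nat_recr /= ?modnDr; lia.
Qed.

Lemma count_mod_below a e m : 0 < a -> e < a ->
  \sum_(0 <= n < m * a + e) (n %% a == e : nat) = m.
Proof.
move=> a_gt0 ea; elim: m => [|m IH].
  rewrite mul0n add0n big1_seq // => n /andP[_]; rewrite mem_index_iota => /andP[_ ne].
  by rewrite modn_small ?(ltn_trans ne) // (ltn_eqF ne).
rewrite (_ : m.+1 * a + e = m * a + e + a); last by lia.
by rewrite (big_cat_nat _ (n := m * a + e)) /= ?IH ?count_mod_window //; lia.
Qed.

Lemma count_residue_below N W a : 0 < a -> W <= N ->
  \sum_(n < N) ((n %% a == W %% a) && (n < W) : nat) = W %/ a.
Proof.
move=> a_gt0 WN.
rewrite -(big_mkord xpredT (fun n => ((n %% a == W %% a) && (n < W) : nat))).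
rewrite (big_cat_nat _ (n := W)) //= [X in _ + X]big1_seq ?addn0; last first.
  move=> n /andP[_]; rewrite mem_index_iota => /andP[+ _].
  by rewrite leqNgt => /negbTE ->; rewrite andbF.
rewrite (eq_big_seq (fun n => (n %% a == W %% a : nat))); last first.
  by move=> n; rewrite mem_index_iota => /andP[_ ->]; rewrite andbT.
by rewrite {1}(divn_eq W a) count_mod_below // ltn_pmod.
Qed.

Lemma divn_mul_complement a b t : coprime a b -> 0 < t < a ->
  b * t %/ a + b * (a - t) %/ a = b - 1.
Proof.
move=> cop /andP[t_gt0 ta]; have a_gt0 : 0 < a by apply: leq_trans ta.
have b_gt0 : 0 < b.
  by move: cop; case: (b) => //; rewrite /coprime gcdn0 => /eqP a1; lia.
have eX := divn_eq (b * t) a.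
set q := b * t %/ a in eX *; set r := b * t %% a in eX.
have ra : r < a by apply: ltn_pmod.
have r_gt0 : 0 < r.
  rewrite lt0n; apply/negP => /eqP r0.
  have : a %| b * t by apply/dvdnP; exists q; rewrite eX r0 addn0.
  by rewrite Gauss_dvdr // => /(dvdn_leq t_gt0); rewrite leqNgt ta.
have bt : b * t < b * a by rewrite ltn_pmul2l.
clearbody q r.
have qb : q < b.
  have : q * a < b * a by lia.
  by rewrite ltn_pmul2r.
have -> : b * (a - t) = (b - q - 1) * a + (a - r) by rewrite mulnBr !mulnBl mul1n; nia.
by rewrite divnMDl // divn_small; lia.
Qed.

Lemma sum_divn_mul_coprime a b : 0 < a -> coprime a b ->
  2 * \sum_(t < a) (b * t %/ a) = (a - 1) * (b - 1).
Proof.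
move=> a_gt0 cop.
rewrite -(big_mkord xpredT (fun t => b * t %/ a)) big_ltn //= muln0 div0n add0n.
rewrite mul2n -addnn {2}big_nat_rev /= -big_split /=.
rewrite (eq_big_nat _ _ (F2 := fun _ => b - 1)) => [|t ht]; last first.
  by rewrite (_ : 1 + a - t.+1 = a - t) ?divn_mul_complement //; lia.
by rewrite sum_nat_const_nat; lia.
Qed.

Lemma sum_divn_block f R E : 0 < f -> E <= f ->
  \sum_(f * R <= t < f * R + E) (t %/ f) = E * R.
Proof.
move=> f_gt0; elim: E => [|E IH] hE; first by rewrite addn0 big_geq.
rewrite addnS big_nat_recr /= ?IH; try lia.
by rewrite (_ : f * R + E = R * f + E) ?divnMDl ?divn_small; lia.
Qed.

Lemma sum_divn_prefix f R E : 0 < f -> E <= f ->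
  2 * \sum_(0 <= t < f * R + E) (t %/ f) = f * R * (R - 1) + 2 * (E * R).
Proof.
move=> f_gt0 hE.
have full R' : 2 * \sum_(0 <= t < f * R') (t %/ f) = f * R' * (R' - 1).
  elim: R' => [|R' IH]; first by rewrite muln0 big_geq.
  rewrite (_ : f * R'.+1 = f * R' + f); last lia.
  by rewrite (big_cat_nat _ (n := f * R')) //= ?sum_divn_block // ?mulnDr ?IH; nia.
rewrite (big_cat_nat _ (n := f * R)) //= ?leq_addr //.
by rewrite sum_divn_block // mulnDr full.
Qed.

Lemma sum_subn_const m n (F : nat -> nat) c : (forall t, m <= t < n -> c <= F t) ->
  \sum_(m <= t < n) (F t - c) + (n - m) * c = \sum_(m <= t < n) F t.
Proof.
move=> H; rewrite -sum_nat_const_nat -big_split /=.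
by apply: eq_big_nat => t /H ht; rewrite subnK.
Qed.

Section ThreeGenerators.

Variables a b c f g : nat.
Hypotheses (a_gt0 : 0 < a) (b_ge : 2 * a <= b) (cE : c + g * a = f * b)
           (coprime_ab : coprime a b) (g_gt0 : 0 < g) (f_ge : 2 * g <= f).

Lemma f_gt0 : 0 < f.
Proof. lia. Qed.

Lemma c_gt0 : 0 < c.
Proof.
have : g * a < f * b by apply: leq_trans (_ : g * a < 2 * g * (2 * a)) _; [nia | exact: leq_mul].
by rewrite -cE; lia.
Qed.

Lemma weightE y z : b * y + c * z + a * g * z = b * (y + f * z).
Proof.
have : (c + g * a) * z = f * b * z by rewrite cE.
by rewrite mulnDr -addnA; lia.
Qed.

Lemma residue_rep n : exists2 t0, t0 < a & n = b * t0 %[mod a].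
Proof.
have [b' inv_b] := coprime_inv_mod a_gt0 coprime_ab.
exists ((b' * n) %% a); first exact: ltn_pmod.
by rewrite modnMmr mulnA (mulnC b) -modnMml inv_b modnMml mul1n.
Qed.

Lemma level_lt y z n t0 : t0 < a -> n < b * t0 + a * b -> b * y + c * z <= n ->
  y + f * z < t0 + 2 * a.
Proof.
move=> t0a nlt sn; rewrite ltnNge; apply/negP => tge.
have bt : b * (y + f * z) < b * t0 + a * b + a * (g * z) by rewrite -weightE mulnA; lia.
have bt_ge : b * (t0 + 2 * a) <= b * (y + f * z) by rewrite leq_mul2l tge orbT.
have gz_le : 2 * (g * z) <= y + f * z.
  by rewrite mulnA; apply: leq_trans (leq_addl _ _); rewrite leq_mul2r f_ge orbT.
have agz : 2 * a * (2 * (g * z)) <= b * (y + f * z).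
  by apply: leq_trans (leq_mul b_ge (leqnn _)) _; rewrite leq_mul2l gz_le orbT.
have b_lt : a * b < a * (g * z) by move: bt bt_ge; rewrite mulnDr; lia.
rewrite ltn_pmul2l // in b_lt.
have : 3 * (b * (y + f * z)) < 4 * (b * (t0 + a)) by move: bt agz; rewrite mulnDr; lia.
by rewrite mulnA [3 * b]mulnC mulnA [4 * b]mulnC -!mulnA ltn_pmul2l; lia.
Qed.

Lemma solvable_in_xE n t0 y z : t0 < a -> n = b * t0 %[mod a] -> n < b * t0 + a * b ->
  solvable_in_x a b c n y z =
  ((y + f * z == t0) && (b * t0 <= n + a * g * z)) ||
  ((y + f * z == t0 + a) && (b * (t0 + a) <= n + a * g * z)).
Proof.
move=> t0a hn hnb; have [b' inv_b] := coprime_inv_mod a_gt0 coprime_ab.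
have tlt := @level_lt y z n t0 t0a hnb.
rewrite /solvable_in_x; have es := weightE y z.
set s := b * y + c * z in es tlt *; set t := y + f * z in es tlt *.
apply/idP/idP => [/andP[sn]|].
  rewrite -eqn_mod_dvd // => /eqP hs.
  have ht : t = t0 %[mod a].
    apply: (eqn_modMl_inv inv_b); rewrite -es -modnDml -hs hn modnDml.
    by rewrite -mulnA modnDMl.
  have dt := divn_eq t a; rewrite ht (modn_small t0a) in dt.
  have : t %/ a * a < 2 * a by move: (tlt sn); rewrite {1}dt; lia.
  rewrite ltn_pmul2r //; case: (t %/ a) dt => [|[|//]] dt _.
    by move: es; rewrite dt mul0n add0n eqxx => <-; rewrite leq_add2r sn.
  by move: es; rewrite dt mul1n (addnC a) eqxx => <-; rewrite leq_add2r sn orbT.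
move=> /orP[]/andP[/eqP ht hle]; rewrite ht in es; rewrite -es leq_add2r in hle;
  rewrite hle -eqn_mod_dvd // hn.
  by rewrite -es -mulnA modnDMl eqxx.
by rewrite -(modnDMl s a (g * z)) mulnA es mulnDr (mulnC b a) modnDMl eqxx.
Qed.

(* [sheet n s z]: z gives a solution of a x + b y + c z = n with y + f z = s. *)
Definition sheet n s z : bool := (f * z <= s) && (b * s <= n + a * g * z).

Lemma num_reps_sheets n t0 : t0 < a -> n = b * t0 %[mod a] -> n < b * t0 + a * b ->
  num_reps [:: a; b; c] n = \sum_(z < n.+1) (sheet n t0 z + sheet n (t0 + a) z).
Proof.
move=> t0a hn hnb; rewrite num_reps3E // exchange_big /=; apply: eq_bigr => z _.
have split_y (y : 'I_n.+1) : solvable_in_x a b c n y z =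
    ((y + f * z == t0) && (b * t0 <= n + a * g * z) : nat) +
    ((y + f * z == t0 + a) && (b * (t0 + a) <= n + a * g * z) : nat) :> nat.
  by rewrite (solvable_in_xE y z t0a hn hnb); do 2 case: eqP => ? //=; lia.
rewrite (eq_bigr _ (fun y _ => split_y y)) big_split /= /sheet.
have y_bound y : solvable_in_x a b c n y z -> y < n.+1.
  move=> /andP[+ _]; have : y <= b * y by rewrite leq_pmull //; lia.
  lia.
rewrite !sum_addn_eq // => fz hc; apply: y_bound;
  by rewrite (solvable_in_xE _ z t0a hn hnb) subnK // eqxx hc ?orbT.
Qed.

Lemma sheet_index_lt n t0 z : t0 < a -> n = b * t0 %[mod a] -> n < b * t0 + a * b ->
  sheet n t0 z || sheet n (t0 + a) z -> z < n.+1.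
Proof.
move=> t0a hn hnb.
have z_le y : solvable_in_x a b c n y z -> z < n.+1.
  move=> /andP[+ _]; have : z <= c * z by rewrite leq_pmull // c_gt0.
  lia.
move=> /orP[] /andP[fz hle].
  by apply: (z_le (t0 - f * z)); rewrite (solvable_in_xE _ z t0a hn hnb) subnK // eqxx hle.
by apply: (z_le (t0 + a - f * z)); rewrite (solvable_in_xE _ z t0a hn hnb) subnK // eqxx hle orbT.
Qed.

Lemma sum_sheet_leq N n s m : n + a * g * m < b * s ->
  \sum_(z < N) sheet n s z <= s %/ f - m.
Proof.
move=> hm; rewrite -subSS; apply: (@sum_leq_range N (sheet n s)) => z _.
have [/andP[fz bz]|] //= := boolP (sheet n s z).
have zs : z <= s %/ f by rewrite leq_divRL ?f_gt0 // mulnC.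
have mz : m < z by rewrite -(ltn_pmul2l (_ : 0 < a * g)) ?muln_gt0 ?a_gt0 //; lia.
by rewrite mz zs.
Qed.

Lemma sum_sheet_leq_all N n s : \sum_(z < N) sheet n s z <= (s %/ f).+1.
Proof.
rewrite -[X in _ <= X]subn0; apply: (@sum_leq_range N (sheet n s)) => z _.
have [/andP[fz _]|] //= := boolP (sheet n s z).
by rewrite leq_divRL ?f_gt0 // mulnC fz.
Qed.

Lemma sum_sheet_geq N n s m : s %/ f < N -> b * s <= n + a * g * m ->
  (s %/ f).+1 - m <= \sum_(z < N) sheet n s z.
Proof.
move=> sN hm; apply: (@sum_geq_range N (sheet n s)) => // z /andP[mz zs].
have fz : f * z <= s by rewrite mulnC -leq_divRL ?f_gt0.
have bz : b * s <= n + a * g * z.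
  by apply: leq_trans hm _; rewrite leq_add2l leq_mul2l mz orbT.
by rewrite /sheet fz bz.
Qed.

Variable p : nat.
Hypothesis p_le : p <= (a - 1) %/ f.

Definition late_defect t := t %/ f - p.
Definition early_defect t := (t + a) %/ f + t %/ f + 1 - p.

(* For t < a, the least n = b t (mod a) with d(n) > p.  As n grows in its class, the
   solutions appear one by one: z = q, q - 1, ..., 0 on level t (at n = b t - a g z), then
   z = Q, Q - 1, ... on level t + a, where q = t %/ f and Q = (t + a) %/ f. *)
Definition threshold t :=
  if p <= t %/ f then b * t - a * g * late_defect t
  else b * t + a * b - a * g * early_defect t.

Lemma threshold_bounds t : t < a ->
  [/\ a * g * (t %/ f) <= b * t, p <= (t + a) %/ f & g * ((t + a) %/ f) < a].
Proof.
move=> ta; have twice s : 2 * g * (s %/ f) <= s.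
  by apply: leq_trans (leq_divM s f); rewrite mulnC leq_mul2l f_ge orbT.
split.
- have := twice t; rewrite -mulnA => h.
  have : a * (2 * (g * (t %/ f))) <= a * t by rewrite leq_mul2l h orbT.
  have : 2 * a * t <= b * t by rewrite leq_mul2r b_ge orbT.
  by rewrite !mulnA; lia.
- by apply: leq_trans p_le _; apply: leq_div2r; lia.
- by have := twice (t + a); lia.
Qed.

Lemma late_defect_leq t : t < a -> a * g * late_defect t <= b * t.
Proof.
move=> /threshold_bounds[agq _ _].
by apply: leq_trans agq; rewrite leq_mul2l /late_defect leq_subr orbT.
Qed.

Lemma early_defect_leq t : t < a -> t %/ f < p ->
  a * g * early_defect t <= a * b.
Proof.
move=> /threshold_bounds[_ _ gQ] qp; rewrite -mulnA leq_mul2l; apply/orP; right.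
apply: leq_trans (_ : g * ((t + a) %/ f) <= b); last lia.
rewrite leq_mul2l /early_defect; apply/orP; right.
by move: qp; move: (t %/ f) ((t + a) %/ f) => q Q; lia.
Qed.

Lemma threshold_mod t : t < a -> threshold t = b * t %[mod a].
Proof.
move=> ta; rewrite /threshold; case: (leqP p (t %/ f)) => pq.
  have := late_defect_leq ta; rewrite -mulnA => hY.
  by rewrite -[in RHS](subnK hY) modnDMl.
have := early_defect_leq ta pq; rewrite -mulnA; set K := early_defect t => hK.
rewrite -(modnDMl _ a (g * K)) subnK; last exact: leq_trans hK (leq_addl _ _).
by rewrite modnDMl.
Qed.

Lemma threshold_lt t : t < a -> threshold t < b * t + a * b.
Proof.
move=> ta; have [_ pQ _] := threshold_bounds ta.
have ab_gt0 : 0 < a * b by rewrite muln_gt0 a_gt0; lia.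
rewrite /threshold; case: (leqP p (t %/ f)) => pq; first by set Y := a * g * _; clearbody Y; lia.
have : 0 < a * g * early_defect t.
  rewrite !muln_gt0 a_gt0 g_gt0 /= /early_defect.
  by move: pQ; move: (t %/ f) ((t + a) %/ f) => q Q; clear; lia.
have := early_defect_leq ta pq; set K := a * g * _; clearbody K; lia.
Qed.

Lemma num_reps_below_threshold n t : t < a -> n = b * t %[mod a] -> n < threshold t ->
  num_reps [:: a; b; c] n <= p.
Proof.
move=> ta hn hW; have [_ pQ gQ] := threshold_bounds ta.
rewrite (num_reps_sheets ta hn (ltn_trans hW (threshold_lt ta))) big_split /=.
move: hW; rewrite /threshold; case: (leqP p (t %/ f)) => pq hW.
  have -> : p = t %/ f - late_defect t + ((t + a) %/ f - (t + a) %/ f).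
    by rewrite subnn addn0 subKn.
  apply: leq_add; apply: sum_sheet_leq.
    have := late_defect_leq ta; move: hW.
    by move: (a * g * late_defect t) => Y; clear; lia.
  have : a * (g * ((t + a) %/ f)) < a * b.
    by rewrite ltn_pmul2l //; move: gQ b_ge; move: (g * ((t + a) %/ f)) => G; clear; lia.
  rewrite mulnA mulnDr; move: hW.
  by move: (a * g * late_defect t) (a * g * ((t + a) %/ f)) => Y1 Y2; clear; lia.
have -> : p = (t %/ f).+1 + ((t + a) %/ f - early_defect t).
  by rewrite /early_defect; move: pq pQ; move: (t %/ f) ((t + a) %/ f) => q Q; clear; lia.
apply: leq_add; first exact: sum_sheet_leq_all.
apply: sum_sheet_leq; have := early_defect_leq ta pq.
rewrite mulnDr; move: hW.
by move: (a * g * early_defect t) => K; clear; lia.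
Qed.

Lemma sheet_top n s m : m <= s %/ f -> b * s <= n + a * g * m -> sheet n s (s %/ f).
Proof.
move=> ms hm; rewrite /sheet mulnC leq_divM /=.
by apply: leq_trans hm _; rewrite leq_add2l leq_mul2l ms orbT.
Qed.

Lemma num_reps_at_threshold t : t < a -> p < num_reps [:: a; b; c] (threshold t).
Proof.
move=> ta; have hW := threshold_mod ta; have hWb := threshold_lt ta.
have [_ pQ _] := threshold_bounds ta.
have top_lt s m : s = t \/ s = t + a -> m <= s %/ f ->
    b * s <= threshold t + a * g * m -> s %/ f < (threshold t).+1.
  move=> hs ms hm; apply: (sheet_index_lt ta hW hWb).
  by case: hs => ?; subst s; rewrite (sheet_top ms hm) ?orbT.
rewrite (num_reps_sheets ta hW hWb) big_split /=.
case: (leqP p (t %/ f)) => pq.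
  have bt : b * t <= threshold t + a * g * late_defect t.
    by rewrite /threshold pq subnK // late_defect_leq.
  have q_lt := top_lt t _ (or_introl erefl) (leq_subr p _) bt.
  apply: leq_trans (leq_addr _ _); apply: leq_trans (sum_sheet_geq q_lt bt).
  by rewrite /late_defect; move: pq; move: (t %/ f) => q; clear; lia.
have np : (p <= t %/ f) = false by rewrite leqNgt pq.
set K := early_defect t.
have hK := early_defect_leq ta pq.
have Kq : K <= (t + a) %/ f.
  by rewrite /K /early_defect; move: pq pQ; move: (t %/ f) ((t + a) %/ f) => q Q; clear; lia.
have bt : b * t <= threshold t + a * g * 0.
  by rewrite /threshold np muln0 addn0; move: hK; move: (a * g * K) => Y; clear; lia.
have bta : b * (t + a) <= threshold t + a * g * K.
  by rewrite /threshold np mulnDr; move: hK; move: (a * g * K) => Y; clear; lia.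
apply: leq_trans (leq_add (sum_sheet_geq (top_lt _ _ (or_introl erefl) (leq0n _) bt) bt)
                          (sum_sheet_geq (top_lt _ _ (or_intror erefl) Kq bta) bta)).
by rewrite /K /early_defect; move: pq pQ; move: (t %/ f) ((t + a) %/ f) => q Q; clear; lia.
Qed.

Lemma num_reps_leq_threshold n t : t < a -> n = b * t %[mod a] ->
  (num_reps [:: a; b; c] n <= p) = (n < threshold t).
Proof.
move=> ta hn; case: (ltnP n (threshold t)) => hW.
  by rewrite (num_reps_below_threshold ta hn hW).
apply/negbTE; rewrite -ltnNge.
have /eqP : threshold t = n %[mod a] by rewrite threshold_mod.
rewrite eq_sym eqn_mod_dvd // => /dvdnP[m hm].
have -> : n = threshold t + a * m by rewrite mulnC -hm subnKC.
exact: leq_trans (num_reps_at_threshold ta) (num_reps3_leq_addMn _ _ _ _ a_gt0).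
Qed.

Lemma count_le_threshold N : (forall t, t < a -> threshold t <= N) ->
  count_le [:: a; b; c] p N = \sum_(t < a) threshold t %/ a.
Proof.
move=> hN; have [b' inv_b] := coprime_inv_mod a_gt0 coprime_ab.
pose tau n := (b' * n) %% a.
have tau_lt n : tau n < a by apply: ltn_pmod.
have tauE n : n = b * tau n %[mod a].
  by rewrite modnMmr mulnA (mulnC b) -modnMml inv_b modnMml mul1n.
have tau_eq n t : t < a -> (tau n == t) = (n %% a == threshold t %% a).
  move=> ta; rewrite threshold_mod //; apply/eqP/eqP => [<-|e]; first by rewrite -tauE.
  by rewrite /tau -modnMmr e modnMmr mulnA -modnMml inv_b modnMml mul1n modn_small.
rewrite /count_le -sum1_card big_mkcond /=.
under eq_bigr => n _ do rewrite inE (num_reps_leq_threshold (tau_lt n) (tauE n)).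
have split_t (n : 'I_N) : (n < threshold (tau n) : nat) =
    \sum_(t < a) ((tau n == t) && (n < threshold t) : nat).
  rewrite (eq_bigr (fun t : 'I_a => ((t + 0 == tau n) && (n < threshold (tau n)) : nat))).
    by rewrite sum_addn_eq => [|_ _]; [case: (_ < _) | rewrite subn0].
  by move=> t _; rewrite addn0 eq_sym; case: eqP => [->|].
rewrite (eq_bigr _ (fun n _ => split_t n)) /= exchange_big /=; apply: eq_bigr => t _.
rewrite -(count_residue_below a_gt0 (hN _ (ltn_ord t))).
by apply: eq_bigr => n _; rewrite tau_eq.
Qed.

Lemma is_sylvester_threshold :
  is_sylvester_p [:: a; b; c] p (\sum_(t < a) threshold t %/ a).
Proof.
have W_le t : t < a -> threshold t <= a * b + a * b.
  move=> ta; have := threshold_lt ta.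
  have : b * t <= b * a by rewrite leq_mul2l ltnW ?orbT.
  by move: (threshold t) => W; rewrite (mulnC b a); lia.
exists (a * b + a * b); split; last exact: count_le_threshold.
move=> n hn; have [t ta hnt] := residue_rep n.
by rewrite ltnNge (num_reps_leq_threshold ta hnt) -leqNgt; apply: leq_trans (W_le _ ta) hn.
Qed.

Lemma threshold_divE t : t < a ->
  if p <= t %/ f then threshold t %/ a + g * late_defect t = b * t %/ a
  else threshold t %/ a + g * early_defect t = b * t %/ a + b.
Proof.
move=> ta; rewrite /threshold; case: (leqP p (t %/ f)) => pq.
  have := late_defect_leq ta; move: (late_defect t) => Y hY.
  have e : b * t = g * Y * a + (b * t - a * g * Y).
    by move: hY; move: (b * t) => B; clear; lia.
  by rewrite [in RHS]e divnMDl // addnC.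
have := early_defect_leq ta pq; move: (early_defect t) => K hK.
have e : b * a + b * t = g * K * a + (b * t + a * b - a * g * K).
  by move: hK; move: (b * t) => B; clear; lia.
have := congr1 (divn^~ a) e; rewrite /= !divnMDl // => e'.
by rewrite addnC -e' addnC.
Qed.

Lemma pf_le : p * f <= a - 1.
Proof. by rewrite -leq_divRL ?f_gt0. Qed.

Lemma sum_threshold_div_defects :
  \sum_(t < a) threshold t %/ a +
    g * (\sum_(0 <= t < p * f) early_defect t + \sum_(p * f <= t < a) late_defect t)
  = \sum_(t < a) b * t %/ a + p * f * b.
Proof.
have pfa := pf_le.
rewrite -(big_mkord xpredT (fun t => threshold t %/ a)).
rewrite -(big_mkord xpredT (fun t => b * t %/ a)).
rewrite !(big_cat_nat _ (n := p * f) (m := 0) (p := a)) //=; try lia.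
rewrite mulnDr !big_distrr /=.
have early : \sum_(0 <= t < p * f) threshold t %/ a +
    \sum_(0 <= t < p * f) g * early_defect t = \sum_(0 <= t < p * f) b * t %/ a + p * f * b.
  rewrite -big_split /= -[p * f in X in _ = _ + X * _]subn0 -sum_nat_const_nat -big_split /=.
  apply: eq_big_nat => t /andP[_ ht].
  have ta : t < a by lia.
  by have := threshold_divE ta; rewrite leqNgt ltn_divLR ?f_gt0 // ht.
have late : \sum_(p * f <= t < a) threshold t %/ a +
    \sum_(p * f <= t < a) g * late_defect t = \sum_(p * f <= t < a) b * t %/ a.
  rewrite -big_split /=; apply: eq_big_nat => t /andP[ht ta].
  by have := threshold_divE ta; rewrite leq_divRL ?f_gt0 // ht.
move: early late; clear; lia.
Qed.

Lemma sum_defects :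
  \sum_(0 <= t < p * f) early_defect t + \sum_(p * f <= t < a) late_defect t + p * a
  = \sum_(0 <= t < a + p * f) t %/ f + p * f.
Proof.
have pfa := pf_le; have f0 := f_gt0.
have early : \sum_(0 <= t < p * f) early_defect t + p * f * p =
    \sum_(0 <= t < p * f) ((t + a) %/ f + t %/ f + 1).
  rewrite /early_defect -{2}(subn0 (p * f)).
  apply: (@sum_subn_const 0 _ (fun t => (t + a) %/ f + t %/ f + 1)) => t _.
  apply: leq_trans p_le _; apply: leq_trans (leq_div2r f (_ : a - 1 <= t + a)) _.
    exact: leq_trans (leq_subr 1 a) (leq_addl t a).
  by rewrite -addnA leq_addr.
have late : \sum_(p * f <= t < a) late_defect t + (a - p * f) * p =
    \sum_(p * f <= t < a) t %/ f.
  apply: (@sum_subn_const _ _ (divn^~ f)) => t /andP[ht _].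
  by rewrite leq_divRL.
have pa : p * a = p * f * p + (a - p * f) * p.
  rewrite -mulnDl subnKC; first by rewrite mulnC.
  exact: leq_trans pfa (leq_subr 1 a).
have split_early : \sum_(0 <= t < p * f) ((t + a) %/ f + t %/ f + 1) =
    \sum_(a <= t < a + p * f) t %/ f + \sum_(0 <= t < p * f) t %/ f + p * f.
  rewrite !big_split /= sum_nat_const_nat subn0 muln1.
  have := @big_addn _ 0 addn 0 (a + p * f) a xpredT (fun t => t %/ f).
  by rewrite add0n addKn => ->.
have split_all : \sum_(0 <= t < a + p * f) t %/ f =
    \sum_(0 <= t < p * f) t %/ f + \sum_(p * f <= t < a) t %/ f +
    \sum_(a <= t < a + p * f) t %/ f.
  rewrite (big_cat_nat _ (n := a)) ?leq_addr // (big_cat_nat _ (n := p * f)) //.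
  exact: leq_trans pfa (leq_subr 1 a).
move: early late pa split_early split_all; clear; lia.
Qed.

Lemma sum_threshold_div (r := (a - 1) %/ f) :
  2 * \sum_(t < a) threshold t %/ a + 2 * (r * a * g)
  = (a - 1) * (b - 1) + 2 * (p * f * b) + (r + p + 1) * (r - p) * f * g.
Proof.
have f0 := f_gt0.
have [fr_le E_le] : f * r <= a /\ a - f * r <= f.
  have := divn_eq (a - 1) f; have := ltn_pmod (a - 1) f0; rewrite -/r.
  by move: ((a - 1) %% f) => e; clear -a_gt0; lia.
have prefix := sum_divn_prefix (r + p) f0 E_le.
rewrite (_ : f * (r + p) + (a - f * r) = a + p * f) in prefix; last by clear -fr_le; lia.
have := sum_threshold_div_defects; have := sum_defects.
have := sum_divn_mul_coprime a_gt0 coprime_ab; move: prefix.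
move: (\sum_(t < a) threshold t %/ a) (\sum_(0 <= t < p * f) early_defect t)
  (\sum_(p * f <= t < a) late_defect t) (\sum_(t < a) b * t %/ a)
  (\sum_(0 <= t < a + p * f) t %/ f) => m S1 S2 B T prefix floor corr defects.
move: ((a - 1) * (b - 1)) floor => X floor.
have [d rE] : exists d, r = p + d by exists (r - p); clear -p_le; lia.
rewrite rE (addKn p d) in fr_le prefix *.
have [E aE] : exists E, a = f * (p + d) + E by exists (a - f * (p + d)); clear -fr_le; lia.
rewrite aE (addKn (f * (p + d)) E) in prefix; rewrite aE in corr *.
move: prefix; case R_eq : (p + d + p) => [|R] prefix.
  have [-> ->] : p = 0 /\ d = 0 by clear -R_eq; lia.
  move: defects corr floor prefix; rewrite !(muln0, mul0n, add0n, addn0).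
  by move=> defects corr floor prefix; nia.
have := congr1 (muln g) corr; have := congr1 (muln g) prefix.
rewrite subSS subn0 !mulnDr => gprefix gcorr.
clear -defects gprefix gcorr floor R_eq; nia.
Qed.

End ThreeGenerators.

Lemma fib_double_leq n : 2 * fib n <= fib n.+2.
Proof. by rewrite mul2n -addnn [fib n.+2]/= leq_add2r fib_leqS. Qed.

Lemma coprime_fibSS n : coprime (fib n) (fib n.+2).
Proof. by rewrite /coprime [fib n.+2]/= gcdnDr; apply: coprime_fibS. Qed.

Unset Implicit Arguments.
Import GRing.Theory Num.Theory.
Local Open Scope ring_scope.

Theorem theorem13 (i k p : nat) :
  (3 <= i)%N -> (3 <= k)%N ->
  let r := ((fib i).-1 %/ fib k)%N in
  (p <= r)%N ->
  exists m : nat,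
    is_sylvester_p [:: fib i; fib (i + 2); fib (i + k)] p m /\
    (m%:R : rat) =
      (1/2) * (((fib i)%:R + 2 * p%:R * (fib k)%:R - 1) * (fib (i + 2))%:R
               - (fib i)%:R + 1)
      - (1/2) * (2 * r%:R * (fib i)%:R
                 - (r%:R + p%:R + 1) * (r%:R - p%:R) * (fib k)%:R)
        * (fib (k - 2))%:R.
Proof.
move=> hi hk r; rewrite /r -subn1 => hp.
have ek : k = (k - 2).+2 by rewrite -addn2 subnK // ltnW.
have a_gt0 : (0 < fib i)%N by rewrite fib_gt0 // ltnW // ltnW.
have g_gt0 : (0 < fib (k - 2))%N by rewrite fib_gt0 // subn_gt0.
have b_ge : (2 * fib i <= fib (i + 2))%N by rewrite addn2 fib_double_leq.
have f_ge : (2 * fib (k - 2) <= fib k)%N by rewrite {2}ek fib_double_leq.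
have cop : coprime (fib i) (fib (i + 2)) by rewrite addn2 coprime_fibSS.
have cE := fibD2 i (k - 2); rewrite -ek -(addn2 i) in cE.
have count := sum_threshold_div a_gt0 b_ge cE cop g_gt0 f_ge hp.
set m := (\sum_(t < fib i) _)%N in count.
exists m; split; first exact: is_sylvester_threshold.
have b_gt0 : (0 < fib (i + 2))%N by rewrite fib_gt0 // addn2.
move/(congr1 (fun n : nat => n%:R : rat)): count.
by rewrite !(natrD, natrM) !natrB //; lra.
Qed.
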